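(* Let $n,m$ be positive integers and $\pi\in S_n$. Then $x_m(\pi)=\dfrac{\Omega_\pi(m)}{(2m+1)^n}$, $x^*_m(\pi)=\dfrac{\Omega^*_\pi(m)}{(2m)^n}$, $x^+_m(\pi)=\dfrac{\Omega^+_\pi(m)}{m^n}$, and moreover $y_m(\pi)=x_m(\pi^{-1})$, $y^*_m(\pi)=x^*_m(\pi^{-1})$, $y^+_m(\pi)=x^+_m(\pi^{-1})$.
   Context: Integers are written with $\bar i=-i$, ordered $0<_{\mathbb Z}\bar1<_{\mathbb Z}1<_{\mathbb Z}\bar2<_{\mathbb Z}2<_{\mathbb Z}\cdots$, $|\bar j|=j$. Write $a\prec_+ b$ if $a<_{\mathbb Z}b$ or $a=b\in\{0,1,2,\ldots\}$, and $a\prec_- b$ if $a<_{\mathbb Z}b$ or $a=b\in\{\bar1,\bar2,\ldots\}$. For $\pi\in S_n$, a $\pi$-partition is $f:[n]\to\mathbb Z$ with, for each $1\le i<n$, $f(\pi(i))\prec_+ f(\pi(i+1))$ if $\pi(i)<\pi(i+1)$ and $f(\pi(i))\prec_- f(\pi(i+1))$ if $\pi(i)>\pi(i+1)$. $\Omega_\pi(m)$ counts $\pi$-partitions with $|f(i)|\le m$; $\Omega^*_\pi(m)$ counts those also never equal to $0$; $\Omega^+_\pi(m)$ counts those with values in $\{1,\ldots,m\}$. Shelf shufflers: a deck of cards labeled $1,\ldots,n$ top to bottom; cards are taken in order $1,\ldots,n$, each independently placed. Lazy mode: each card chooses uniformly among $2m+1$ options: shelf $0$ (placed below the cards already there), or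 shelf $j\in\{1,\ldots,m\}$ on top of, or below, the cards already there. Standard mode: same without shelf $0$ ($2m$ options). Strict mode: uniformly one of shelves $1,\ldots,m$, always placed below the cards already there. Finally piles are stacked with shelf $0$ (if present) on top, then shelf $1$, ..., shelf $m$; the result is the permutation $\pi$ with $\pi(i)$ the card in position $i$ from the top. $x_m(\pi),x^*_m(\pi),x^+_m(\pi)$ are the probabilities of obtaining $\pi$ in lazy, standard, strict mode. Riffle shuffles: for a weak composition $A$ of $n$ into $r$ parts, chosen with multinomial probability $\binom{n}{A}/r^n$, cut the deck $1,\ldots,n$ into consecutive piles of these sizes, then interleave the piles, each of the $\binom nA$ interleavings (keeping each pile's internal order) being equally likely; $\pi(i)$ is the card in position $i$. Classic $m$-riffle: $r=m$, no piles reversed. Down-up $m$-riffle: $r=2m$, piles $1,3,5,\ldots$ reversed. Up-down $m$-riffle: $r=2m+1$, piles $2,4,6,\ldots$ reversed. $y^+_m(\pi)$, $y^*_m(\pi)$, $y_m(\pi)$ denote the probabilities of obtaining $\pi$ from a classic, down-up, up-down $m$-riffle shuffle respectively. *)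

(* Cards and positions are 0-indexed: card labels 1..n of the
   paper are 0..n-1 here, positions likewise. *)
From mathcomp Require Import all_boot all_order all_algebra all_fingroup.
Set Implicit Arguments. Unset Strict Implicit. Unset Printing Implicit Defensive.
Import Order.TTheory GRing.Theory Num.Theory.

Local Open Scope ring_scope.

(* rank of an integer in the order 0, -1, 1, -2, 2, ... *)
Definition zkey (a : int) : nat := (2 * `|a|)%N - (a < 0)%R.

Definition zlt (a b : int) : bool := (zkey a < zkey b)%N.

Definition precp (a b : int) : bool := zlt a b || ((a == b) && (0 <= a)).
Definition precm (a b : int) : bool := zlt a b || ((a == b) && (a < 0)).

Definition is_pi_partition n (pi : 'S_n) (f : 'I_n -> int) : bool :=
  [forall i : 'I_n, forall j : 'I_n, (val j == (val i).+1)%N ==>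
     (if (val (pi i) < val (pi j))%N then precp (f (pi i)) (f (pi j))
      else precm (f (pi i)) (f (pi j)))].

(* value k : 'I_(2m+1) encodes the integer k - m, so the range is [-m, m] *)
Definition zdec m (k : 'I_(2 * m + 1)) : int := (val k)%:Z - m%:Z.

Definition Omega n m (pi : 'S_n) : nat :=
  #|[set g : {ffun 'I_n -> 'I_(2 * m + 1)} |
      is_pi_partition pi (fun i => zdec (g i))]|.

Definition Omega_star n m (pi : 'S_n) : nat :=
  #|[set g : {ffun 'I_n -> 'I_(2 * m + 1)} |
      is_pi_partition pi (fun i => zdec (g i)) &&
      [forall i, zdec (g i) != 0]]|.

Definition Omega_plus n m (pi : 'S_n) : nat :=
  #|[set g : {ffun 'I_n -> 'I_(2 * m + 1)} |
      is_pi_partition pi (fun i => zdec (g i)) &&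
      [forall i, 1 <= zdec (g i)]]|.

Local Close Scope ring_scope.

(* the permutation as the deck (seq of cards, top to bottom): position i holds pi i *)
Definition perm_seq n (pi : 'S_n) : seq 'I_n := [seq pi i | i <- enum 'I_n].

(* choice c : card -> (shelf, placed_on_top).  Cards are processed in order
   0,...,n-1; each shelf pile is a seq, top first. *)
Definition shelf_pile n (choice : 'I_n -> nat * bool) (k : nat) : seq 'I_n :=
  foldl (fun p c => if (choice c).1 == k then
                      (if (choice c).2 then c :: p else rcons p c)
                    else p) [::] (enum 'I_n).

Definition shelf_deck n m (choice : 'I_n -> nat * bool) : seq 'I_n :=
  flatten [seq shelf_pile choice k | k <- iota 0 m.+1].

(* lazy mode: 2m+1 options: 0 -> shelf 0 (below);
   2j-1 -> shelf j on top; 2j -> shelf j below (j = 1..m) *)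
Definition lazy_opt m (k : 'I_(2 * m + 1)) : nat * bool :=
  if val k == 0 then (0, false) else (((val k).+1)./2, odd (val k)).

(* standard mode: 2m options: 2(j-1) -> shelf j on top, 2(j-1)+1 -> shelf j below *)
Definition std_opt m (k : 'I_(2 * m)) : nat * bool :=
  (((val k)./2).+1, ~~ odd (val k)).

Definition strict_opt m (k : 'I_m) : nat * bool := ((val k).+1, false).

Local Open Scope ring_scope.

(* probabilities: each card independently uniform among the options, i.e.
   every choice function has probability 1/(#options)^n *)
Definition x_lazy n m (pi : 'S_n) : rat :=
  (#|[set c : {ffun 'I_n -> 'I_(2 * m + 1)} |
       shelf_deck m (fun i => lazy_opt (c i)) == perm_seq pi]|)%:R
  / ((2 * m + 1) ^ n)%N%:R.

Definition x_std n m (pi : 'S_n) : rat :=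
  (#|[set c : {ffun 'I_n -> 'I_(2 * m)} |
       shelf_deck m (fun i => std_opt (c i)) == perm_seq pi]|)%:R
  / ((2 * m) ^ n)%N%:R.

Definition x_strict n m (pi : 'S_n) : rat :=
  (#|[set c : {ffun 'I_n -> 'I_m} |
       shelf_deck m (fun i => strict_opt (c i)) == perm_seq pi]|)%:R
  / (m ^ n)%N%:R.

(* weak compositions of n into r parts: A : 'I_r -> 'I_n.+1 with sum n *)
Definition multinom n r (A : {ffun 'I_r -> 'I_n.+1}) : rat :=
  (n`!)%:R / (\prod_(k < r) ((A k)`!)%:R).

(* pile l (0-indexed) of the cut: cards s, s+1, ..., s + A l - 1 with
   s = A_0 + ... + A_(l-1), top to bottom; reversed if rv l *)
Definition riffle_pile n r (A : {ffun 'I_r -> 'I_n.+1}) (rv : nat -> bool)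
    (l : 'I_r) : seq nat :=
  let p := iota (\sum_(j < r | (val j < val l)%N) val (A j))%N (A l) in
  if rv (val l) then rev p else p.

(* an interleaving is a word w : positions -> pile labels, with A l
   occurrences of label l; position i receives the next (topmost remaining)
   card of pile (w i) *)
Definition riffle_deck n r (A : {ffun 'I_r -> 'I_n.+1}) (rv : nat -> bool)
    (w : {ffun 'I_n -> 'I_r}) : seq nat :=
  [seq nth 0%N (riffle_pile A rv (w i))
         #|[set j : 'I_n | (val j < val i)%N && (w j == w i)]|
  | i <- enum 'I_n].

Definition is_interleaving n r (A : {ffun 'I_r -> 'I_n.+1})
    (w : {ffun 'I_n -> 'I_r}) : bool :=
  [forall l : 'I_r, #|[set i : 'I_n | w i == l]| == val (A l)].

(* probability of obtaining pi: sum over weak compositions A of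
   P(A) = multinom(A)/r^n times the probability that a uniformly random
   interleaving (out of multinom(A) of them) yields pi *)
Definition riffle_prob n r (rv : nat -> bool) (pi : 'S_n) : rat :=
  \sum_(A : {ffun 'I_r -> 'I_n.+1} | (\sum_(k < r) val (A k))%N == n)
     (multinom A / (r ^ n)%N%:R) *
     ((#|[set w : {ffun 'I_n -> 'I_r} |
          is_interleaving A w && (riffle_deck A rv w == map val (perm_seq pi))]|)%:R
      / multinom A).

(* classic m-riffle: m piles, none reversed *)
Definition y_plus n m (pi : 'S_n) : rat := riffle_prob m (fun _ => false) pi.
(* down-up m-riffle: 2m piles, piles 1,3,5,... (1-indexed) i.e. 0,2,4,... (0-indexed) reversed *)
Definition y_star n m (pi : 'S_n) : rat := riffle_prob (2 * m) (fun k => ~~ odd k) pi.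
(* up-down m-riffle: 2m+1 piles, piles 2,4,6,... (1-indexed) i.e. 1,3,5,... (0-indexed) reversed *)
Definition y_lazy n m (pi : 'S_n) : rat := riffle_prob (2 * m + 1) (fun k => odd k) pi.

From mathcomp Require Import all_boot all_order all_algebra all_fingroup.
From mathcomp Require Import zify.
Set Implicit Arguments. Unset Strict Implicit. Unset Printing Implicit Defensive.
Import Order.TTheory GRing.Theory Num.Theory.

(* Each shuffle, and each pi-partition, assigns a key to every card (for the
   riffles: to every position), and the outcome is the enumeration sorted in the keyed
   order: smaller keys first, ties broken by increasing index, except for the keys
   in a "reversed" class (odd keys, or the reversed piles of a riffle) where the
   index decreases.  A card put on top of shelf j gets key 2j-1, one put below gets
   2j.  A pi-partition f keys card i by the rank of f(i) in 0, -1, 1, -2, 2, ...,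
   whose odd ranks are the negative values, and f is a pi-partition exactly when pi
   lists the cards in keyed order.  In a riffle with pile word w, position i
   receives the card numbered by the rank of i in the keyed order of positions, so
   the deck is pi exactly when pi^-1 lists the positions in keyed order; the
   multinomial weight of the cut cancels the uniform choice of interleaving, so each
   word w has probability r^-n.  All probabilities thus become counts of key
   functions under which a fixed enumeration is sorted, and a monotone relabelling
   of the keys matches the counts. *)

Lemma card_set_orb (T : finType) (P Q : pred T) : (forall x, P x -> ~~ Q x) ->
  #|[set x | P x || Q x]| = #|[set x | P x]| + #|[set x | Q x]|.
Proof.
move=> PQ; rewrite -cardsUI.
have -> : [set x | P x] :&: [set x | Q x] = set0.
  by apply/setP => x; rewrite !inE; case: (boolP (P x)) => // /PQ/negPf.
by rewrite cards0 addn0; apply: eq_card => x; rewrite !inE.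
Qed.

Lemma card_ffun_rekey (I A B : finType) (kA : A -> nat) (kB : B -> nat) (C : pred B)
    (P : (I -> nat) -> bool) :
  (forall f1 f2, f1 =1 f2 -> P f1 = P f2) -> injective kA -> {in C &, injective kB} ->
  (forall a, exists2 b, C b & kB b = kA a) -> (forall b, C b -> exists a, kA a = kB b) ->
  #|[set c : {ffun I -> A} | P (fun i => kA (c i))]| =
  #|[set g : {ffun I -> B} | P (fun i => kB (g i)) && [forall i, C (g i)]]|.
Proof.
move=> P_ext kA_inj kB_inj kB_onto kA_onto.
have h_ex a : exists b, C b && (kB b == kA a).
  by have [b Cb kBb] := kB_onto a; exists b; rewrite Cb kBb eqxx.
pose h a := xchoose (h_ex a).
have /all_and2[C_h kB_h] : forall a, C (h a) /\ kB (h a) = kA a.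
  by move=> a; have /andP[-> /eqP] := xchooseP (h_ex a).
pose hc (c : {ffun I -> A}) := [ffun i => h (c i)].
have hc_inj : injective hc.
  move=> c1 c2 /ffunP eq_c; apply/ffunP => i.
  by apply: kA_inj; rewrite -!kB_h; have := eq_c i; rewrite !ffunE => ->.
rewrite -(card_imset _ hc_inj); congr #|pred_of_set _|; apply/setP => g.
rewrite inE; apply/imsetP/andP => [[c] | [Pg /forallP Cg]].
- rewrite inE => Pc ->; split; last by apply/forallP => i; rewrite ffunE.
  by rewrite (P_ext _ (fun i => kA (c i))) // => i; rewrite ffunE.
- have a_ex i : exists a, kA a == kB (g i).
    by have [a kAa] := kA_onto _ (Cg i); exists a; rewrite kAa.
  exists [ffun i => xchoose (a_ex i)].
    rewrite inE -(P_ext (fun i => kB (g i))) // => i.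
    by rewrite ffunE; have /eqP := xchooseP (a_ex i).
  apply/ffunP => i; rewrite /hc !ffunE; apply: kB_inj; rewrite ?unfold_in ?C_h ?Cg //.
  by rewrite kB_h; have /eqP := xchooseP (a_ex i).
Qed.

Lemma pairwise_rev (T : Type) (r : rel T) (s : seq T) :
  pairwise r (rev s) = pairwise (fun x y => r y x) s.
Proof.
elim: s => //= x s IHs; rewrite rev_cons -cats1 pairwise_cat IHs /= andbT.
by rewrite allrel1r all_rev andbC.
Qed.

Lemma pairwise_flatten_map (I T : Type) (ri : rel I) (r : rel T) (F : I -> seq T) (s : seq I) :
  pairwise ri s -> (forall i, pairwise r (F i)) ->
  (forall i j, ri i j -> allrel r (F i) (F j)) -> pairwise r (flatten (map F s)).
Proof.
move=> ri_s r_F r_FF; elim: s ri_s => //= i s IHs /andP[ri_i ri_s].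
rewrite pairwise_cat r_F IHs // andbT.
elim: s ri_i {ri_s IHs} => [|j s IHs] /=; first by rewrite allrel0r.
by case/andP=> ri_ij ri_is; rewrite allrel_catr r_FF ?IHs.
Qed.

Lemma pairwise_filter_enum_ord n (p : pred 'I_n) (r : rel 'I_n) :
  {in p &, forall a b : 'I_n, a < b -> r a b} -> pairwise r [seq c <- enum 'I_n | p c].
Proof.
move=> r_lt; apply: (@sub_in_pairwise _ p (relpre val ltn)) => //; first exact: filter_all.
apply: pairwise_filter; rewrite -(pairwise_map val ltn) val_enum_ord.
by rewrite -sorted_pairwise ?iota_ltn_sorted //; exact: ltn_trans.
Qed.

Lemma sorted_enum_ord n (r : rel 'I_n) :
  sorted r (enum 'I_n) = [forall i : 'I_n, forall j : 'I_n, (val j == (val i).+1) ==> r i j].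
Proof.
case: n r => [|n] r; first by rewrite enum_ord0; apply/esym/forallP => -[].
apply/(sortedP ord0)/forallP => [r_step i | r_step k].
- apply/forallP => j; apply/implyP => /eqP j_succ.
  have := r_step i; rewrite size_enum_ord -j_succ ltn_ord => /(_ isT).
  by rewrite nth_ord_enum -[nth _ _ j]/(nth _ _ (nat_of_ord j)) nth_ord_enum.
- rewrite size_enum_ord => lt_k.
  have := forallP (r_step (Ordinal (ltnW lt_k))) (Ordinal lt_k); rewrite eqxx /=.
  by rewrite -[k in nth _ _ k]/(nat_of_ord (Ordinal (ltnW lt_k))) nth_ord_enum
    -[k.+1]/(nat_of_ord (Ordinal lt_k)) nth_ord_enum.
Qed.

Lemma mem_perm_seq n (pi : 'S_n) : forall x, x \in perm_seq pi.
Proof. by move=> x; apply/mapP; exists (pi^-1 x)%g; rewrite ?mem_enum ?permKV. Qed.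

Lemma perm_seq_uniq n (pi : 'S_n) : uniq (perm_seq pi).
Proof. by rewrite map_inj_uniq ?enum_uniq //; exact: perm_inj. Qed.

Lemma index_perm_seq n (pi : 'S_n) x : index x (perm_seq pi^-1) = pi x.
Proof.
rewrite /perm_seq -{1}(permK pi x) index_map ?index_enum_ord //; exact: perm_inj.
Qed.

Section StrictTotalOrder.
Variables (T : finType) (r : rel T).
Hypotheses (r_irr : irreflexive r) (r_trans : transitive r)
  (r_total : forall a b, a != b -> r a b || r b a).

Definition rank x := #|[set y | r y x]|.

Lemma rank_lt x y : r y x -> rank y < rank x.
Proof.
move=> ryx; have sub : y |: [set z | r z y] \subset [set z | r z x].
  by apply/subsetP => z; rewrite !inE => /predU1P[->|/r_trans]; last exact.
apply: leq_trans (subset_leq_card sub).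
by rewrite cardsU1 inE r_irr.
Qed.

Lemma sorted_index_rank s : uniq s -> (forall x, x \in s) ->
  sorted r s <-> (forall x, index x s = rank x).
Proof.
move=> s_uniq s_all; split=> [s_sorted x | s_rank].
- have r_index y : r y x = (index y s < index x s).
    case: (ltngtP (index y s) (index x s)) => [lt_yx|lt_xy|eq_yx].
    + exact: (sorted_ltn_index r_trans s_sorted).
    + have rxy := sorted_ltn_index r_trans s_sorted _ _ (s_all x) (s_all y) lt_xy.
      by apply/negP => /(r_trans rxy); rewrite r_irr.
    + by rewrite -(nth_index x (s_all y)) eq_yx nth_index ?r_irr.
  rewrite /rank -[index x s](size_takel (ltnW (_ : index x s < size s))) ?index_mem //.
  rewrite -(card_uniqP (take_uniq _ s_uniq)) -cardsE; apply: eq_card => y.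
  by rewrite !inE r_index in_take.
- case: s s_uniq s_all s_rank => // x0 s' s_uniq s_all s_rank.
  apply/(sortedP x0) => i lt_i; set a := nth x0 _ i; set b := nth x0 _ i.+1.
  have index_a : index a (x0 :: s') = i by rewrite index_uniq // ltnW.
  have index_b : index b (x0 :: s') = i.+1 by rewrite index_uniq.
  have /r_total/orP[] // : a != b.
    by apply/eqP => eq_ab; move: index_b; rewrite -eq_ab index_a; lia.
  by move/rank_lt; rewrite -!s_rank index_a index_b ltnNge leqnSn.
Qed.

End StrictTotalOrder.

Section KeyedOrder.
Variables (n : nat) (key : 'I_n -> nat) (rv : nat -> bool).

Definition keyed_lt : rel 'I_n := fun a b =>
  (key a < key b) || (key a == key b) && (if rv (key a) then b < a else a < b).

Lemma keyed_lt_irr : irreflexive keyed_lt.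
Proof. by move=> a; rewrite /keyed_lt ltnn eqxx; case: (rv _); rewrite ltnn. Qed.

Lemma keyed_lt_trans : transitive keyed_lt.
Proof.
move=> b a c; rewrite /keyed_lt.
move=> /orP[lt_ab|/andP[/eqP eq_ab ab]] /orP[lt_bc|/andP[/eqP eq_bc bc]].
- by rewrite (ltn_trans lt_ab lt_bc).
- by rewrite -eq_bc lt_ab.
- by rewrite eq_ab lt_bc.
- rewrite -eq_bc -eq_ab eqxx ltnn /=; rewrite -eq_ab in bc.
  by case: (rv (key a)) ab bc => ab bc; [apply: ltn_trans bc ab | apply: ltn_trans ab bc].
Qed.

Lemma keyed_lt_total a b : a != b -> keyed_lt a b || keyed_lt b a.
Proof.
move=> neq_ab; rewrite /keyed_lt; case: (ltngtP (key a) (key b)) => //= ->.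
by case: (rv _); case: (ltngtP a b) neq_ab => // /val_inj ->; rewrite eqxx.
Qed.

Lemma keyed_rankE i : rank keyed_lt i =
  #|[set j | key j < key i]| +
  #|[set j | (key j == key i) && (if rv (key i) then i < j else j < i)]|.
Proof.
rewrite /rank -card_set_orb; last by move=> j /ltn_eqF ->.
by apply: eq_card => j; rewrite !inE /keyed_lt; case: eqP => [->|].
Qed.

End KeyedOrder.

Lemma keyed_lt_relabel n (key key' : 'I_n -> nat) (rv rv' : nat -> bool) (phi : nat -> nat) :
  {mono phi : i j / i < j} -> (forall k, rv' (phi k) = rv k) -> key' =1 phi \o key ->
  keyed_lt key' rv' =2 keyed_lt key rv.
Proof.
move=> phi_mono rv_phi key'E a b.
have phi_eq i j : (phi i == phi j) = (i == j).
  case: (ltngtP i j) => [lt_ij|lt_ji|->]; last exact: eqxx.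
  - by rewrite ltn_eqF ?phi_mono.
  - by rewrite gtn_eqF ?phi_mono.
by rewrite /keyed_lt !key'E /= rv_phi phi_mono phi_eq.
Qed.

Lemma eq_keyed_lt n (key key' : 'I_n -> nat) rv : key =1 key' ->
  keyed_lt key rv =2 keyed_lt key' rv.
Proof. by move=> E a b; rewrite /keyed_lt !E. Qed.

Definition sorting_keys n N (rv : nat -> bool) (s : seq 'I_n) : {set {ffun 'I_n -> 'I_N}} :=
  [set c : {ffun 'I_n -> 'I_N} | sorted (keyed_lt (fun i => val (c i)) rv) s].

Lemma sorting_keys_relabel n N (rv rv' : nat -> bool) (phi : nat -> nat) (s : seq 'I_n) :
  {mono phi : i j / i < j} -> (forall k, rv' (phi k) = rv k) ->
  sorting_keys N rv s =
  [set c : {ffun 'I_n -> 'I_N} | sorted (keyed_lt (fun i => phi (c i)) rv') s].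
Proof.
move=> phi_mono rv_phi; apply/setP => c; rewrite !inE.
exact/esym/eq_sorted/keyed_lt_relabel.
Qed.

Lemma sorting_keys_succ n N (s : seq 'I_n) :
  sorting_keys N (fun k => ~~ odd k) s =
  [set c : {ffun 'I_n -> 'I_N} | sorted (keyed_lt (fun i => (c i).+1) odd) s].
Proof. exact: (@sorting_keys_relabel _ _ _ odd succn). Qed.

Lemma sorting_keys_double n N (s : seq 'I_n) :
  sorting_keys N (fun _ => false) s =
  [set c : {ffun 'I_n -> 'I_N} | sorted (keyed_lt (fun i => 2 * (c i).+1) odd) s].
Proof.
by apply: (@sorting_keys_relabel _ _ _ odd (fun k => 2 * k.+1)) => [i j | k];
  rewrite ?ltn_mul2l ?ltnS ?oddM.
Qed.

Definition shelf_key (o : nat * bool) : nat := if o.2 then (2 * o.1).-1 else 2 * o.1.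

Section ShelfDeck.
Variables (n m : nat) (choice : 'I_n -> nat * bool).

Local Notation shelf_lt := (keyed_lt (fun c => shelf_key (choice c)) odd).

Lemma shelf_pileE k : shelf_pile choice k =
  rev [seq c <- enum 'I_n | ((choice c).1 == k) && (choice c).2] ++
  [seq c <- enum 'I_n | ((choice c).1 == k) && ~~ (choice c).2].
Proof.
rewrite /shelf_pile -[RHS]/(_ ++ [::] ++ _); elim: (enum 'I_n) [::] => [|c s IHs] p /=.
  by rewrite cats0.
rewrite IHs; case: eqP => _ //=; case: (choice c).2 => /=.
- by rewrite rev_cons cat_rcons.
- by rewrite -cats1 -!catA.
Qed.

Hypothesis choice_top : forall c, (choice c).2 -> 0 < (choice c).1.

Lemma shelf_deck_sorted : sorted shelf_lt (shelf_deck m choice).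
Proof.
rewrite sorted_pairwise; last exact: keyed_lt_trans.
apply: (@pairwise_flatten_map _ _ ltn).
- by rewrite -sorted_pairwise ?iota_ltn_sorted //; exact: ltn_trans.
- move=> k; rewrite shelf_pileE pairwise_cat pairwise_rev; apply/and3P; split.
  + apply/allrelP => a b; rewrite mem_rev !mem_filter.
    move=> /andP[/andP[/eqP ka ta] _] /andP[/andP[/eqP kb tb] _].
    have := choice_top ta; rewrite /keyed_lt /shelf_key ta (negPf tb) ka kb; lia.
  + apply: pairwise_filter_enum_ord => a b; rewrite !unfold_in.
    move=> /andP[/eqP ka ta] /andP[/eqP kb tb] lt_ab.
    have := choice_top ta; rewrite /keyed_lt /shelf_key ta tb ka kb ltnn eqxx => k_gt0.
    by have -> : odd (2 * k).-1 by lia.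
  + apply: pairwise_filter_enum_ord => a b; rewrite !unfold_in.
    move=> /andP[/eqP ka ta] /andP[/eqP kb tb] lt_ab.
    by rewrite /keyed_lt /shelf_key (negPf ta) (negPf tb) ka kb ltnn eqxx oddM.
- move=> k l lt_kl; apply/allrelP => a b; rewrite !shelf_pileE !mem_cat !mem_rev !mem_filter.
  case/orP=> /andP[/andP[/eqP ka _] _]; case/orP=> /andP[/andP[/eqP kb _] _];
  by rewrite /keyed_lt /shelf_key ka kb; case: (choice a).2; case: (choice b).2; lia.
Qed.

Hypothesis choice_shelf : forall c, (choice c).1 <= m.

Lemma mem_shelf_deck c : c \in shelf_deck m choice.
Proof.
apply/flatten_mapP; exists (choice c).1; first by rewrite mem_iota ltnS choice_shelf.
by rewrite shelf_pileE mem_cat mem_rev !mem_filter eqxx -enumT mem_enum; case: (choice c).2.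
Qed.

Lemma shelf_deckE s : (forall c, c \in s) -> (shelf_deck m choice == s) = sorted shelf_lt s.
Proof.
move=> s_all; apply/eqP/idP => [<-|s_sorted]; first exact: shelf_deck_sorted.
apply: (irr_sorted_eq (@keyed_lt_trans _ _ _) (@keyed_lt_irr _ _ _)
  shelf_deck_sorted s_sorted).
by move=> c; rewrite mem_shelf_deck s_all.
Qed.

End ShelfDeck.

Lemma lazy_opt_key m (k : 'I_(2 * m + 1)) : shelf_key (lazy_opt k) = k.
Proof.
rewrite /lazy_opt; case: eqP => [-> // | _]; rewrite /shelf_key /= uphalfE.
by case: ifP => odd_k; lia.
Qed.

Lemma lazy_opt_shelf m (k : 'I_(2 * m + 1)) : (lazy_opt k).1 <= m.
Proof. by rewrite /lazy_opt; case: eqP => //= _; have := ltn_ord k; rewrite uphalfE; lia. Qed.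

Lemma lazy_opt_top m (k : 'I_(2 * m + 1)) : (lazy_opt k).2 -> 0 < (lazy_opt k).1.
Proof. by rewrite /lazy_opt; case: eqP => //= _ odd_k; rewrite uphalfE; lia. Qed.

Lemma lazy_shelf_keys n m (s : seq 'I_n) : (forall c, c \in s) ->
  [set c : {ffun 'I_n -> 'I_(2 * m + 1)} | shelf_deck m (fun i => lazy_opt (c i)) == s] =
  sorting_keys (2 * m + 1) odd s.
Proof.
move=> s_all; apply/setP => c; rewrite !inE shelf_deckE // => [|i|i].
- by apply/eq_sorted/eq_keyed_lt => i; rewrite lazy_opt_key.
- exact: lazy_opt_top.
- exact: lazy_opt_shelf.
Qed.

Lemma std_opt_key m (k : 'I_(2 * m)) : shelf_key (std_opt k) = k.+1.
Proof. by rewrite /std_opt /shelf_key /=; case: ifP => odd_k; lia. Qed.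

Lemma std_shelf_keys n m (s : seq 'I_n) : (forall c, c \in s) ->
  [set c : {ffun 'I_n -> 'I_(2 * m)} | shelf_deck m (fun i => std_opt (c i)) == s] =
  sorting_keys (2 * m) (fun k => ~~ odd k) s.
Proof.
move=> s_all; rewrite sorting_keys_succ; apply/setP => c.
rewrite !inE shelf_deckE // => [|i].
- by apply/eq_sorted/eq_keyed_lt => i; rewrite std_opt_key.
- by have := ltn_ord (c i); rewrite /std_opt /=; lia.
Qed.

Lemma strict_shelf_keys n m (s : seq 'I_n) : (forall c, c \in s) ->
  [set c : {ffun 'I_n -> 'I_m} | shelf_deck m (fun i => strict_opt (c i)) == s] =
  sorting_keys m (fun _ => false) s.
Proof.
move=> s_all; rewrite sorting_keys_double; apply/setP => c.
by rewrite !inE shelf_deckE // => i; exact: ltn_ord.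
Qed.

Section Riffle.
Variables (n r : nat).
Implicit Types (w : {ffun 'I_n -> 'I_r}) (A : {ffun 'I_r -> 'I_n.+1}).

Definition pile_sizes w : {ffun 'I_r -> 'I_n.+1} := [ffun l => inord #|[set i | w i == l]|].

Lemma pile_sizesE w l : val (pile_sizes w l) = #|[set i | w i == l]|.
Proof.
by rewrite ffunE -[val _]/(nat_of_ord _) inordK // ltnS (leq_trans (max_card _)) ?card_ord.
Qed.

Lemma card_pile_lt w (l : nat) :
  #|[set i | w i < l]| = \sum_(k < r | k < l) val (pile_sizes w k).
Proof.
rewrite -sum1dep_card (partition_big w (fun k : 'I_r => k < l)) //.
apply: eq_bigr => k lt_kl; rewrite pile_sizesE -sum1dep_card; apply: eq_bigl => i.
by case: eqP => [->|]; rewrite ?lt_kl ?andbF ?andbT.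
Qed.

Lemma sum_pile_sizes w : \sum_(k < r) val (pile_sizes w k) = n.
Proof.
rewrite (eq_bigl (fun k : 'I_r => k < r)) => [|k]; last by rewrite ltn_ord.
rewrite -card_pile_lt -[RHS](card_ord n) -cardsT; apply: eq_card => i.
by rewrite !inE ltn_ord.
Qed.

Lemma is_interleavingE A w : is_interleaving A w = (pile_sizes w == A).
Proof.
apply/forallP/eqP => [sizes_w | <- l]; last by rewrite pile_sizesE.
by apply/ffunP => l; apply: val_inj; rewrite pile_sizesE; exact/eqP.
Qed.

Lemma multinom_neq0 A : multinom A != 0%R.
Proof.
rewrite /multinom mulf_neq0 ?invr_eq0 ?pnatr_eq0 -?lt0n ?fact_gt0 //.
by apply/prodf_neq0 => k _; rewrite pnatr_eq0 -lt0n fact_gt0.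
Qed.

Lemma riffle_prob_card rv (pi : 'S_n) : riffle_prob r rv pi =
  (#|[set w | riffle_deck (pile_sizes w) rv w == map val (perm_seq pi)]|%:R
   / (r ^ n)%:R)%R.
Proof.
rewrite /riffle_prob.
under eq_bigr => A _ do rewrite mulrC mulrA divfK ?multinom_neq0 //.
rewrite -mulr_suml -natr_sum -sum1dep_card.
rewrite (partition_big pile_sizes (fun A => (\sum_(k < r) val (A k)) == n)); last first.
  by move=> w _; rewrite sum_pile_sizes.
congr (_%:R / _)%R; apply: eq_bigr => A _; rewrite -sum1dep_card; apply: eq_bigl => w.
by rewrite is_interleavingE; case: eqVneq => [<-|]; rewrite ?andbT ?andbF.
Qed.

Lemma riffle_deck_rank rv w :
  riffle_deck (pile_sizes w) rv w =
  [seq rank (keyed_lt (fun i => val (w i)) rv) i | i <- enum 'I_n].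
Proof.
apply/eq_map => i; rewrite keyed_rankE /riffle_pile.
set l := w i; set below := #|[set j | (w j == l) && (j < i)]|.
set above := #|[set j | (w j == l) && (i < j)]|.
have size_l : val (pile_sizes w l) = below + above + 1.
  rewrite pile_sizesE (cardsD1 i) inE eqxx addnC; congr (_ + _).
  rewrite -card_set_orb; last by move=> j /andP[_ lt_ji]; rewrite ltnNge (ltnW lt_ji) andbF.
  by apply: eq_card => j; rewrite !inE neq_ltn andbC; case: (w j == l).
have -> : #|[set j : 'I_n | (val j < val i) && (w j == l)]| = below.
  by apply: eq_card => j; rewrite !inE andbC.
rewrite -card_pile_lt size_l; case: (rv l).
- rewrite nth_rev size_iota ?nth_iota; try lia; congr (_ + _).
  by rewrite (_ : _ - _ = above); [apply: eq_card => j; rewrite !inE | lia].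
- rewrite nth_iota; last by lia.
  by congr (_ + _); apply: eq_card => j; rewrite !inE.
Qed.

End Riffle.

Lemma riffle_deckE n r rv (w : {ffun 'I_n -> 'I_r}) (pi : 'S_n) :
  (riffle_deck (pile_sizes w) rv w == map val (perm_seq pi)) =
  sorted (keyed_lt (fun i => val (w i)) rv) (perm_seq pi^-1).
Proof.
have rank_sorted := sorted_index_rank (@keyed_lt_irr n (fun i => val (w i)) rv)
  (@keyed_lt_trans _ _ _) (@keyed_lt_total _ _ _) (perm_seq_uniq pi^-1) (mem_perm_seq pi^-1).
rewrite riffle_deck_rank -[map val (perm_seq pi)]map_comp.
apply/eqP/idP => [/eq_in_map deck_pi | /rank_sorted rank_pi].
- by apply/rank_sorted => x; rewrite index_perm_seq deck_pi ?mem_enum.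
- by apply/eq_in_map => x _; rewrite /= -rank_pi index_perm_seq.
Qed.

Lemma riffle_prob_keys n r rv (pi : 'S_n) :
  riffle_prob r rv pi = (#|sorting_keys r rv (perm_seq pi^-1)|%:R / (r ^ n)%:R)%R.
Proof.
rewrite riffle_prob_card; congr (_%:R / _)%R.
by apply: eq_card => w; rewrite !inE riffle_deckE.
Qed.

Lemma zkey_inj : injective zkey.
Proof. by move=> a b; rewrite /zkey; lia. Qed.

Lemma odd_zkey a : odd (zkey a) = (a < 0)%R.
Proof. by rewrite /zkey; lia. Qed.

Lemma prec_zkey (x y : int) (a b : nat) : a != b ->
  (if a < b then precp x y else precm x y) =
  (zkey x < zkey y) || (zkey x == zkey y) && (if odd (zkey x) then b < a else a < b).
Proof.
move=> neq_ab; rewrite /precp /precm /zlt (inj_eq zkey_inj) odd_zkey ltNge.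
by case: ltngtP neq_ab => // _ _; case: (0 <= x)%R; rewrite ?andbT ?andbF.
Qed.

Lemma pi_partition_sorted n (pi : 'S_n) (f : 'I_n -> int) :
  is_pi_partition pi f = sorted (keyed_lt (fun c => zkey (f c)) odd) (perm_seq pi).
Proof.
rewrite /perm_seq sorted_map sorted_enum_ord; apply: eq_forallb => i; apply: eq_forallb => j.
case: eqP => //= j_succ; rewrite prec_zkey // val_eqE (inj_eq perm_inj).
by apply/eqP => eq_ij; move: j_succ; rewrite eq_ij; lia.
Qed.

Lemma zkey_surj k : exists2 z : int, (`|z| = uphalf k)%N & zkey z = k.
Proof.
rewrite uphalfE; case: (boolP (odd k)) => odd_k.
- by exists (- Posz k.+1./2)%R; rewrite /zkey; lia.
- by exists (Posz k./2); rewrite /zkey; lia.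
Qed.

(* [zdec] is written with [val], while [lia] only recognises [nat_of_ord]. *)
Lemma zdecE m (b : 'I_(2 * m + 1)) : zdec b = ((b : nat)%:Z - m%:Z)%R.
Proof. by []. Qed.

Lemma zdec_inj m : injective (@zdec m).
Proof. by move=> a b; rewrite !zdecE => eq_ab; apply: ord_inj; lia. Qed.

Lemma zdec_abs_le m (b : 'I_(2 * m + 1)) : (`|zdec b| <= m)%N.
Proof. by have := ltn_ord b; rewrite zdecE; lia. Qed.

Lemma zdec_onto m (z : int) : (`|z| <= m)%N -> exists b : 'I_(2 * m + 1), zdec b = z.
Proof.
move=> z_le; have lt_b : (absz (z + m%:Z)%R < 2 * m + 1)%N by lia.
by exists (Ordinal lt_b); rewrite zdecE /=; lia.
Qed.

Lemma card_pi_partitions n m (pi : 'S_n) (C : pred int) N (key : 'I_N -> nat) :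
  injective key ->
  (forall a, exists2 z : int, (`|z| <= m)%N && C z & zkey z = key a) ->
  (forall z : int, (`|z| <= m)%N -> C z -> exists a, key a = zkey z) ->
  #|[set g : {ffun 'I_n -> 'I_(2 * m + 1)} |
     is_pi_partition pi (fun i => zdec (g i)) && [forall i, C (zdec (g i))]]| =
  #|[set c : {ffun 'I_n -> 'I_N} |
     sorted (keyed_lt (fun i => key (c i)) odd) (perm_seq pi)]|.
Proof.
move=> key_inj key_zkey zkey_key; symmetry.
rewrite (@card_ffun_rekey _ _ _ _ (fun b : 'I_(2 * m + 1) => zkey (zdec b))
  (fun b => C (zdec b)) (fun f => sorted (keyed_lt f odd) (perm_seq pi))).
- by apply: eq_card => g; rewrite !inE pi_partition_sorted.
- by move=> f1 f2 E; apply: eq_sorted; apply: eq_keyed_lt.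
- exact: key_inj.
- by move=> b1 b2 _ _ /zkey_inj/zdec_inj.
- move=> a; have [z /andP[z_le Cz] <-] := key_zkey a.
  by have [b zb] := zdec_onto z_le; exists b; rewrite zb.
- by move=> b Cb; apply: zkey_key; rewrite ?zdec_abs_le.
Qed.

Lemma Omega_keys n m (pi : 'S_n) : Omega m pi = #|sorting_keys (2 * m + 1) odd (perm_seq pi)|.
Proof.
rewrite /Omega -(@card_pi_partitions _ m _ predT _ val val_inj).
- by apply: eq_card => g; rewrite !inE (introT forallP (fun _ => isT)) andbT.
- move=> a; have [z z_abs z_key] := zkey_surj a.
  by exists z; rewrite // z_abs andbT uphalfE; have := ltn_ord a; lia.
- move=> z z_le _; have lt_z : zkey z < 2 * m + 1 by rewrite /zkey; lia.
  by exists (Ordinal lt_z).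
Qed.

Lemma Omega_star_keys n m (pi : 'S_n) :
  Omega_star m pi = #|sorting_keys (2 * m) (fun k => ~~ odd k) (perm_seq pi)|.
Proof.
rewrite /Omega_star sorting_keys_succ.
rewrite -(@card_pi_partitions _ m _ (fun z => z != 0)%R _ (fun a : 'I_(2 * m) => a.+1)) //.
- by move=> a b [] /val_inj.
- move=> a; have [z z_abs z_key] := zkey_surj (val a).+1.
  by exists z; rewrite // z_abs; have := ltn_ord a; rewrite -z_key /zkey; lia.
- move=> z z_le z_neq0; have lt_z : (zkey z).-1 < 2 * m by rewrite /zkey; lia.
  by exists (Ordinal lt_z); rewrite /= /zkey; lia.
Qed.

Lemma Omega_plus_keys n m (pi : 'S_n) :
  Omega_plus m pi = #|sorting_keys m (fun _ => false) (perm_seq pi)|.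
Proof.
rewrite /Omega_plus sorting_keys_double.
rewrite -(@card_pi_partitions _ m _ (fun z => 1 <= z)%R _ (fun a : 'I_m => 2 * a.+1)) //.
- by move=> a b /eqP; rewrite eqn_mul2l => /eqP [] /val_inj.
- move=> a; exists (Posz a.+1); last by rewrite /zkey; lia.
  by have := ltn_ord a; lia.
- move=> z z_le z_ge1; have lt_z : `|z|.-1 < m by lia.
  by exists (Ordinal lt_z); rewrite /= /zkey; lia.
Qed.

Local Open Scope ring_scope.

Theorem proposition3p6 (n m : nat) (hn : (0 < n)%N) (hm : (0 < m)%N) (pi : 'S_n) :
  (x_lazy m pi = (Omega m pi)%:R / ((2 * m + 1) ^ n)%N%:R /\
   x_std m pi = (Omega_star m pi)%:R / ((2 * m) ^ n)%N%:R /\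
   x_strict m pi = (Omega_plus m pi)%:R / (m ^ n)%N%:R) /\
  (y_lazy m pi = x_lazy m (pi^-1)%g /\
   y_star m pi = x_std m (pi^-1)%g /\
   y_plus m pi = x_strict m (pi^-1)%g).
Proof.
have cover := mem_perm_seq pi; have cover_inv := mem_perm_seq (pi^-1)%g.
split; [split; [|split] | split; [|split]].
- by rewrite /x_lazy lazy_shelf_keys ?Omega_keys.
- by rewrite /x_std std_shelf_keys ?Omega_star_keys.
- by rewrite /x_strict strict_shelf_keys ?Omega_plus_keys.
- by rewrite /y_lazy riffle_prob_keys /x_lazy lazy_shelf_keys.
- by rewrite /y_star riffle_prob_keys /x_std std_shelf_keys.
- by rewrite /y_plus riffle_prob_keys /x_strict strict_shelf_keys.
Qed.
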